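(* Let $G$ be a finite simple graph. Define recursively: $G_1=G$; for $i\ge 1$, if $G_i$ is nonempty, let $F_i$ be an induced linear forest of $G_i$ of maximum order, chosen among all maximum-order induced linear forests of $G_i$ to have the minimum number of edges, and let $G_{i+1}=G\setminus\bigcup_{j=1}^{i}V(F_j)$ (the subgraph induced on the remaining vertices). Stop when all vertices are used, obtaining a partition $V(G)=V(F_1)\cup\cdots\cup V(F_k)$. Then for every $i\ge 2$, every $v\in V(F_i)$ and every $j<i$, the vertex $v$ has at least $2$ neighbors in $V(F_j)$.
   Context: A linear forest is a forest each of whose connected components is a path (a single vertex counts as a path). An induced linear forest of a graph $H$ is an induced subgraph of $H$ that is a linear forest; its order is its number of vertices and its size is its number of edges. *)

(* A finite simple graph = symmetric irreflexive rel on a finType. *)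
From mathcomp Require Import all_boot.
Set Implicit Arguments. Unset Strict Implicit. Unset Printing Implicit Defensive.

Section Graphs.
Variables (T : finType) (e : rel T).

Definition induced_rel (S : {set T}) : rel T :=
  [rel x y | [&& x \in S, y \in S & e x y]].

Definition component (S : {set T}) (x : T) : {set T} :=
  [set y in S | connect (induced_rel S) x y].

Definition consec (s : seq T) (x y : T) : bool :=
  has (fun p => (p == (x, y)) || (p == (y, x))) (zip s (behead s)).

Definition is_path_graph (C : {set T}) : Prop :=
  exists s : seq T, [/\ uniq s, (forall x, (x \in s) = (x \in C)) &
    (forall x y, x \in C -> y \in C -> e x y = consec s x y)].

Definition induced_linear_forest (S : {set T}) : Prop :=
  forall x, x \in S -> is_path_graph (component S x).

Definition n_edges (S : {set T}) : nat :=
  #|[set A : {set T} | [exists x, exists y,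
       (A == [set x; y]) && [&& x \in S, y \in S & e x y]]]|.

Definition remaining (Fs : seq {set T}) (i : nat) : {set T} :=
  ~: \bigcup_(F <- take i Fs) F.

Definition good_choice (R F : {set T}) : Prop :=
  [/\ F \subset R, induced_linear_forest F &
    forall L : {set T}, L \subset R -> induced_linear_forest L ->
      #|L| <= #|F| /\ (#|L| = #|F| -> n_edges F <= n_edges L)].

Definition greedy_partition (Fs : seq {set T}) : Prop :=
  [/\ forall i, i < size Fs ->
        remaining Fs i != set0 /\ good_choice (remaining Fs i) (nth set0 Fs i)
    & remaining Fs (size Fs) = set0].

End Graphs.

From mathcomp Require Import all_boot zify.
Set Implicit Arguments. Unset Strict Implicit. Unset Printing Implicit Defensive.

(* Let F be the forest chosen in G[R] and v a vertex of R outside F; every vertex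
   of a later forest is such a vertex.  If v had no neighbour in F, then F + v would
   be a larger induced linear forest.  If v had exactly one neighbour u in F, then
   either u is isolated in G[F], and F + v is again a larger induced linear forest
   (v hangs off u), or u has a neighbour in F, and F - u + v is an induced linear
   forest of the same order in which v is isolated, so it has strictly fewer edges
   than F.  Both contradict the choice of F. *)

Section Consecutive.
Variable T : finType.
Implicit Types (s t : seq T) (u w x y z : T).

Lemma mem_zip_behead s x y : uniq s ->
  ((x, y) \in zip s (behead s)) = [&& x \in s, y \in s & index y s == (index x s).+1].
Proof.
elim: s => [|a t IH] //= /andP[aNt ut].
case: t aNt ut IH => [|b t] aNt ut IH.
  by rewrite !inE; case: eqP => [->|]; case: eqP => [->|] //=; rewrite eqxx.
set t' := b :: t in aNt ut IH *.
have -> : zip (a :: t') t' = (a, b) :: zip t' (behead t') by [].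
have bt' : b \in t' by rewrite mem_head.
rewrite !in_cons IH // xpair_eqE (eq_sym a x) (eq_sym a y).
have [->|xa] := eqVneq x a; have [->|ya] := eqVneq y a;
  rewrite ?eqxx ?(negbTE aNt) ?andbF ?orbF //=.
- by apply: contraNF aNt => /eqP ->.
- by rewrite (eq_sym b y); case: (y == b) => /=; rewrite ?andbF.
Qed.

Lemma consecE s x y : uniq s -> consec s x y =
  [&& x \in s, y \in s & (index y s == (index x s).+1) || (index x s == (index y s).+1)].
Proof.
move=> us; rewrite /consec (@eq_has _ _ (predU (pred1 (x, y)) (pred1 (y, x)))) //.
rewrite has_predU !has_pred1 !mem_zip_behead //.
by case: (x \in s); case: (y \in s).
Qed.

Lemma consec_sym s : symmetric (consec s).
Proof. by move=> x y; rewrite /consec; apply: eq_has => p; rewrite orbC. Qed.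

Lemma uniq_cat_notin (s1 s2 : seq T) x : uniq (s1 ++ s2) -> x \in s2 -> x \notin s1.
Proof. by rewrite cat_uniq => /and3P[_ /hasPn s2Ns1 _]; apply: s2Ns1. Qed.

Lemma consec_infix s1 t s2 x y : uniq (s1 ++ t ++ s2) -> x \in t -> y \in t ->
  consec (s1 ++ t ++ s2) x y = consec t x y.
Proof.
move=> us xt yt; have ut : uniq t by apply: infix_uniq us; apply/infixP; exists s1, s2.
have index_infix z : z \in t -> index z (s1 ++ t ++ s2) = size s1 + index z t.
  move=> zt; rewrite index_cat index_cat zt ifF //; apply/negbTE.
  by apply: uniq_cat_notin us _; rewrite mem_cat zt.
by rewrite !consecE // !index_infix // !mem_cat xt yt !orbT /= -!addnS !eqn_add2l.
Qed.

Lemma consec_cat_sep s1 u s2 w z : uniq (s1 ++ u :: s2) -> w \in s1 -> z \in s2 ->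
  consec (s1 ++ u :: s2) w z = false.
Proof.
move=> us ws1 zs2; have zNs1 : z \notin s1 by apply: uniq_cat_notin us _; rewrite inE zs2 orbT.
have zNu : z != u by apply: contraTneq us => <-; rewrite cat_uniq /= zs2 !andbF.
rewrite consecE // !index_cat ws1 (negbTE zNs1) /= (eq_sym u z) (negbTE zNu).
have wlt : index w s1 < size s1 by rewrite index_mem.
apply/negbTE/and3P => -[_ _ /orP[] /eqP]; lia.
Qed.

End Consecutive.

Section InducedSubgraphs.
Variables (T : finType) (e : rel T).
Hypothesis e_sym : symmetric e.
Implicit Types (A C S : {set T}) (s : seq T).

Definition closed_in S A := forall w z, w \in A -> z \in S -> e w z -> z \in A.

(* [is_path_graph e C] unfolds to [exists s, path_order C s]. *)
Definition path_order C s := [/\ uniq s, forall x, (x \in s) = (x \in C) &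
  forall x y, x \in C -> y \in C -> e x y = consec s x y].

Lemma induced_rel_sym S : symmetric (induced_rel e S).
Proof. by move=> x y; rewrite /induced_rel /= e_sym andbCA. Qed.

Lemma component_sub S x : component e S x \subset S.
Proof. by apply/subsetP => y; rewrite inE => /andP[]. Qed.

Lemma component_closed_in S x : closed_in S (component e S x).
Proof.
move=> w z; rewrite !inE => /andP[wS cxw] zS ewz; rewrite zS.
by apply: connect_trans cxw (connect1 _); rewrite /induced_rel /= wS zS.
Qed.

Lemma component_closed_sub S A x : A \subset S -> closed_in S A -> x \in A ->
  component e S x = component e A x.
Proof.
move=> AS Acl xA; apply/setP => y; rewrite !inE; apply/idP/idP.
- case/andP=> _ /connectP[p xp ->{y}].
  elim: p x xA xp => [|z p IH] x xA /=; first by rewrite xA connect0.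
  case/andP=> /and3P[_ zS exz] zp; have zA := Acl x z xA zS exz.
  have /andP[-> czl] := IH z zA zp.
  by apply: connect_trans czl; apply: connect1; rewrite /induced_rel /= xA zA.
- case/andP=> yA cxy; rewrite (subsetP AS _ yA); apply: connect_sub cxy => a b.
  by case/and3P=> aA bA eab; apply: connect1; rewrite /induced_rel /= !(subsetP AS).
Qed.

Lemma component_path_order C s x : path_order C s -> x \in C -> component e C x = C.
Proof.
case: s => [|h t] [us sC eC] xC; first by move: xC; rewrite -sC.
have ht : path (induced_rel e C) h t.
  apply/(pathP h) => i lti.
  have aC : nth h (h :: t) i \in C by rewrite -sC mem_nth //= ltnS ltnW.
  have bC : nth h t i \in C by rewrite -sC inE mem_nth ?orbT.
  have ia : index (nth h (h :: t) i) (h :: t) = i by apply: index_uniq; rewrite //= ltnS ltnW.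
  have ib : index (nth h t i) (h :: t) = i.+1 by apply: (@index_uniq _ h i.+1 (h :: t)).
  by rewrite /induced_rel /= aC bC eC // consecE // !sC aC bC ia ib eqxx.
have hC z : z \in C -> connect (induced_rel e C) h z by rewrite -sC; apply: path_connect.
apply/setP => y; rewrite inE; apply: andb_idr => yC.
by apply: connect_trans (hC y yC); rewrite (sym_connect_sym (induced_rel_sym C)) hC.
Qed.

Lemma closed_path_graph_component S A s x : A \subset S -> closed_in S A ->
  path_order A s -> x \in A -> component e S x = A.
Proof.
by move=> AS Acl As xA; rewrite (component_closed_sub AS Acl xA) (component_path_order As).
Qed.

Lemma path_order_infix C s1 t s2 :
  path_order C (s1 ++ t ++ s2) -> path_order [set y in t] t.
Proof.
case=> us sC eC; have ut : uniq t by apply: infix_uniq us; apply/infixP; exists s1, s2.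
split=> // [x|x y]; first by rewrite inE.
rewrite !inE => xt yt; rewrite -(consec_infix (s1 := s1) (s2 := s2)) // eC //.
by rewrite -sC !mem_cat xt orbT.
by rewrite -sC !mem_cat yt orbT.
Qed.

Lemma path_graph_segment S x s1 u s2 t :
  path_order (component e S x) (s1 ++ u :: s2) -> (t == s1) || (t == s2) -> x \in t ->
  is_path_graph e (component e (S :\ u) x).
Proof.
set C := component e S x => Cs ts1s2 xt; have [us sC eC] := Cs.
have Ct : path_order [set y in t] t.
  case/orP: ts1s2 => /eqP->; first exact: (path_order_infix (s1 := [::]) Cs).
  by apply: (path_order_infix (s1 := s1 ++ [:: u]) (s2 := [::])); rewrite cats0 -catA.
have tC y : y \in t -> y \in C.
  by move=> yt; rewrite -sC mem_cat inE; case/orP: ts1s2 => /eqP tE; rewrite -tE yt ?orbT.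
have uNt : u \notin t.
  by case/orP: ts1s2 => /eqP->; move: us; rewrite cat_uniq /= => /and4P[_ /norP[] // _ _ /andP[]].
have tSu : [set y in t] \subset S :\ u.
  apply/subsetP => y; rewrite !inE => yt; rewrite (subsetP (component_sub S x)) ?tC // andbT.
  by apply: contraNneq uNt => <-.
have t_closed : closed_in (S :\ u) [set y in t].
  move=> w z; rewrite !inE => wt /andP[zNu zS] ewz.
  have zC : z \in C := component_closed_in (tC w wt) zS ewz.
  have : consec (s1 ++ u :: s2) w z by rewrite -eC // tC.
  apply: contraTT => zNt.
  move: zC; rewrite -sC mem_cat inE (negbTE zNu) /=.
  case/orP: ts1s2 => /eqP tE; rewrite tE in wt zNt; rewrite (negbTE zNt) ?orbF => zs.
  - by rewrite consec_cat_sep.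
  - by rewrite consec_sym consec_cat_sep.
by exists t; rewrite (closed_path_graph_component tSu t_closed Ct) ?inE.
Qed.

Lemma linear_forest_setD1 S u :
  induced_linear_forest e S -> induced_linear_forest e (S :\ u).
Proof.
move=> lf x; rewrite !inE => /andP[xNu xS].
have [s Cs] := lf x xS; have [_ sC _] := Cs.
have xC : x \in component e S x by rewrite inE xS connect0.
have [uC|uNC] := boolP (u \in component e S x); last first.
  have CSu : component e S x \subset S :\ u.
    apply/subsetP => y yC; rewrite !inE (subsetP (component_sub S x)) // andbT.
    by apply: contraNneq uNC => <-.
  have Ccl : closed_in (S :\ u) (component e S x).
    by move=> w z wC; rewrite in_setD1 => /andP[_ zS]; apply: component_closed_in.
  by exists s; rewrite (closed_path_graph_component CSu Ccl Cs xC).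
rewrite -sC in uC; rewrite -sC in xC; move: Cs xC; case/splitPr: uC => s1 s2 Cs.
rewrite mem_cat inE (negbTE xNu) /= => /orP[] xt; apply: (path_graph_segment Cs _ xt);
  by rewrite eqxx ?orbT.
Qed.

Hypothesis e_irr : irreflexive e.

Lemma path_order_set1 v : path_order [set v] [:: v].
Proof. by split=> // [x|x y]; rewrite ?inE // => /eqP-> /eqP->; rewrite e_irr. Qed.

Lemma path_order_set2 u v : e u v -> path_order [set u; v] [:: u; v].
Proof.
move=> euv; have uNv : u != v by apply: contraTneq euv => ->; rewrite e_irr.
split=> [|x|x y]; rewrite ?inE //= ?andbT ?inE //.
rewrite /consec /= !xpair_eqE.
by case/orP=> /eqP-> /orP[]/eqP->; rewrite ?e_irr ?eqxx ?(eq_sym v u) ?(negbTE uNv) /= ?(e_sym v u).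
Qed.

Lemma linear_forest_setU1_isolated S v : induced_linear_forest e S ->
  (forall w, w \in S -> e v w = false) -> induced_linear_forest e (v |: S).
Proof.
move=> lf vNS x; rewrite in_setU1 => /orP[/eqP->|xS].
  rewrite (closed_path_graph_component _ _ (path_order_set1 v)) ?inE //.
  - by exists [:: v]; apply: path_order_set1.
  - by rewrite sub1set setU11.
  - by move=> w z; rewrite !inE => /eqP-> /orP[/eqP->|/vNS->].
have [s Cs] := lf x xS.
rewrite (closed_path_graph_component _ _ Cs) ?inE ?xS ?connect0 //; first by exists s.
  exact: subset_trans (component_sub S x) (subsetUr _ _).
move=> w z wC; rewrite in_setU1 => /orP[/eqP->|zS]; last exact: component_closed_in.
by rewrite e_sym vNS // (subsetP (component_sub S x)).
Qed.

Lemma linear_forest_setU1_pendant S u v : induced_linear_forest e S -> u \in S ->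
  (forall w, w \in S -> e u w = false) -> (forall w, w \in S -> e v w = (w == u)) ->
  induced_linear_forest e (v |: S).
Proof.
move=> lf uS uNS vS x xvS.
have euv : e u v by rewrite e_sym vS ?eqxx.
have [xuv|xNuv] := boolP (x \in [set u; v]).
  rewrite (closed_path_graph_component _ _ (path_order_set2 euv)) //.
  - by exists [:: u; v]; apply: path_order_set2.
  - by rewrite subUset !sub1set setU11 inE uS orbT.
  - move=> w z; rewrite !inE => /orP[]/eqP-> /orP[/eqP->|zS]; rewrite ?eqxx ?orbT //.
      by rewrite uNS.
    by rewrite vS // => ->.
have [xNu xS] : x != u /\ x \in S.
  by move: xvS xNuv; rewrite !inE negb_or => /orP[/eqP->|xS] /andP[xNu xNv]; rewrite ?eqxx in xNv.
have Su_closed : closed_in S (S :\ u).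
  move=> w z; rewrite !inE => /andP[_ wS] zS ewz; rewrite zS andbT.
  by apply: contraTneq ewz => ->; rewrite e_sym uNS.
have [s Cs] := lf x xS.
rewrite (component_closed_sub (subD1set S u) Su_closed) ?inE ?xNu // in Cs.
rewrite (closed_path_graph_component _ _ Cs) ?inE ?xNu ?xS ?connect0 //; first by exists s.
  exact: subset_trans (component_sub _ x) (subset_trans (subD1set S u) (subsetUr _ _)).
move=> w z wC; have /setD1P[wNu wS] := subsetP (component_sub _ x) w wC.
rewrite in_setU1 => /orP[/eqP->|zS ewz]; first by rewrite e_sym vS // (negbTE wNu).
apply: (component_closed_in wC _ ewz); rewrite !inE zS andbT.
by apply: contraTneq ewz => ->; rewrite e_sym uNS.
Qed.

Definition edges S : {set {set T}} := [set A : {set T} | [exists x, exists y,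
  (A == [set x; y]) && [&& x \in S, y \in S & e x y]]].

Lemma n_edgesE S : n_edges e S = #|edges S|.
Proof. by []. Qed.

Lemma edgesS S1 S2 : S1 \subset S2 -> edges S1 \subset edges S2.
Proof.
move=> S12; apply/subsetP => A; rewrite !inE => /existsP[x /existsP[y /and4P[A_xy xS yS exy]]].
by apply/existsP; exists x; apply/existsP; exists y; rewrite A_xy !(subsetP S12) ?exy.
Qed.

Lemma edges_setU1_isolated S v :
  (forall w, w \in S -> e v w = false) -> edges (v |: S) = edges S.
Proof.
move=> vNS; apply/eqP; rewrite eqEsubset (edgesS (subsetUr _ _)) andbT.
apply/subsetP => A; rewrite !inE => /existsP[x /existsP[y /and4P[A_xy xvS yvS exy]]].
have NvS z : z \in v |: S -> z != v -> z \in S by rewrite in_setU1 => /orP[/eqP->|]; rewrite ?eqxx.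
have xNv : x != v.
  apply: contraTneq exy => ->.
  by move: yvS; rewrite in_setU1 => /orP[/eqP->|/vNS->]; rewrite ?e_irr.
have yNv : y != v by apply: contraTneq exy => ->; rewrite e_sym vNS ?NvS.
by apply/existsP; exists x; apply/existsP; exists y; rewrite A_xy !NvS.
Qed.

Lemma edges_setD1_proper S u w : u \in S -> w \in S -> e u w -> edges (S :\ u) \proper edges S.
Proof.
move=> uS wS euw; apply/properP; split; first exact/edgesS/subD1set.
exists [set u; w].
  by rewrite inE; apply/existsP; exists u; apply/existsP; exists w; rewrite eqxx uS wS euw.
rewrite inE; apply/negP => /existsP[x /existsP[y /and4P[/eqP uw_xy xSu ySu _]]].
have : u \in [set x; y] by rewrite -uw_xy set21.
by rewrite !inE => /orP[]/eqP xyu; [move: xSu | move: ySu]; rewrite -xyu setD11.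
Qed.

Lemma good_choice_two_neighbours R F v : good_choice e R F -> v \in R -> v \notin F ->
  2 <= #|[set u in F | e v u]|.
Proof.
case=> FR lfF opt vR vNF; rewrite leqNgt ltnS; apply/negP => N_le1.
have vFR : v |: F \subset R by rewrite subUset sub1set vR FR.
have card_vF : #|v |: F| = #|F|.+1 by rewrite cardsU1 vNF.
have not_larger : ~ induced_linear_forest e (v |: F).
  by move=> lf_vF; have [] := opt _ vFR lf_vF; rewrite card_vF ltnn.
have [N0|[u uN]] := set_0Vmem [set u in F | e v u].
  apply/not_larger/linear_forest_setU1_isolated => // w wF.
  by apply/negbTE/negP => evw; move/setP/(_ w): N0; rewrite !inE wF evw.
have uF : u \in F by move: uN; rewrite inE => /andP[].
have N_u : [set u in F | e v u] =i pred1 u := card_le1P N_le1 u uN.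
have vF w : w \in F -> e v w = (w == u) by move=> wF; move: (N_u w); rewrite !inE wF.
have [w /andP[wF euw]|uNF] := pickP [pred w | (w \in F) && e u w]; last first.
  apply/not_larger/(linear_forest_setU1_pendant lfF uF) => // w wF.
  by have /= := uNF w; rewrite wF.
set L := v |: (F :\ u).
have vNFu z : z \in F :\ u -> e v z = false by rewrite in_setD1 => /andP[zNu /vF->]; apply/negbTE.
have lfL : induced_linear_forest e L.
  exact/linear_forest_setU1_isolated/vNFu/linear_forest_setD1.
have LR : L \subset R by rewrite subUset sub1set vR (subset_trans (subD1set F u) FR).
have card_L : #|L| = #|F| by rewrite cardsU1 in_setD1 (negbTE vNF) andbF (cardsD1 u F) uF.
have [_ /(_ card_L)] := opt L LR lfL; apply/negP; rewrite -ltnNge !n_edgesE.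
by rewrite edges_setU1_isolated //; apply/proper_card/(edges_setD1_proper uF wF euw).
Qed.

End InducedSubgraphs.

Lemma remaining_subset (T : finType) (Fs : seq {set T}) i j :
  j <= i -> remaining Fs i \subset remaining Fs j.
Proof.
move=> ji; rewrite setCS -(take_takel Fs ji) -{2}(cat_take_drop j (take i Fs)).
by rewrite big_cat subsetUl.
Qed.

Lemma remaining_nth_notin (T : finType) (Fs : seq {set T}) i j v :
  j < i -> v \in remaining Fs i -> v \notin nth set0 Fs j.
Proof.
move=> ji; rewrite in_setC; apply: contra => vFj.
have jFs : j < size Fs by rewrite ltnNge; apply: contraL vFj => /(nth_default set0)->; rewrite inE.
rewrite bigcup_seq; apply/bigcupP; exists (nth set0 Fs j) => //.
by rewrite -(nth_take _ ji) mem_nth // size_take; case: ifP => //; lia.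
Qed.

Theorem claim1 (T : finType) (e : rel T) (e_sym : symmetric e)
    (e_irr : irreflexive e) (Fs : seq {set T}) :
  greedy_partition e Fs ->
  forall i j, j < i -> i < size Fs ->
  forall v, v \in nth set0 Fs i ->
    2 <= #|[set u in nth set0 Fs j | e v u]|.
Proof.
case=> greedy _ i j ji iFs v vFi.
have [_ [FiRi _ _]] := greedy i iFs.
have vRi := subsetP FiRi v vFi.
have [_ Fj_good] := greedy j (ltn_trans ji iFs).
apply: (good_choice_two_neighbours e_sym e_irr Fj_good).
- exact: subsetP (remaining_subset Fs (ltnW ji)) v vRi.
- exact: remaining_nth_notin ji vRi.
Qed.
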